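(* Suppose $\sum_{(a,n)\in\mathsf A}P^{a,n}(X)D_{a,n}\in\overline{\mathrm{Der}}\,\mathcal O(\mathfrak n_+)$ has bounded grade. Then for every $K$, for all but finitely many $n$, $P^{a,n}(X)\in\mathcal O(\mathfrak n_+)_{<n-K}\otimes\Big(\mathbb C\oplus\bigoplus_{(b,m)\in\mathsf A,\ m\ge n-K}\mathbb C X^{b,m}\Big)$.
   Context: Let $\mathring{\mathfrak g}$ be a finite-dimensional simple complex Lie algebra, $\mathring\Delta_+$ its positive roots, $\mathring I$ the index set of its simple roots, and $\mathcal I=(\mathring\Delta\setminus\{0\})\sqcup\mathring I$ (indexing a Cartan–Weyl basis). Let $\mathsf A=\{(\alpha,0):\alpha\in\mathring\Delta_+\}\cup(\mathcal I\times\mathbb Z_{\ge1})$. Let $\mathcal O(\mathfrak n_+)=\mathbb C[X^{a,n}]_{(a,n)\in\mathsf A}$, $D_{a,n}=\partial/\partial X^{a,n}$, and for $k\ge1$ let $\mathcal O(\mathfrak n_+)_{<k}=\mathbb C[X^{a,n}:(a,n)\in\mathsf A,\ n<k]$. Let $\overline{\mathrm{Der}}\,\mathcal O(\mathfrak n_+)$ be the space of possibly infinite formal sums $\sum_{(a,n)\in\mathsf A}P^{a,n}(X)D_{a,n}$ with $P^{a,n}\in\mathcal O(\mathfrak n_+)$. Let $\mathcal O(\mathfrak n_+)=\bigoplus_{k\in\mathbb Z}\mathcal O(\mathfrak n_+)_{[k]}$ be the $\mathbb Z$-grading with $X^{a,n}$ in degree $-n$. Such a sum has bounded grade if there exists $M$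 with $P^{a,n}\in\bigoplus_{k=-M}^{M}\mathcal O(\mathfrak n_+)_{[n+k]}$ for all $(a,n)\in\mathsf A$. *)

From HB Require Import structures.
From mathcomp Require Import all_boot all_order all_algebra finmap.
From mathcomp Require Import complex.
From mathcomp Require Import Rstruct.
Set Implicit Arguments. Unset Strict Implicit. Unset Printing Implicit Defensive.
Import Order.TTheory GRing.Theory Num.Theory.
Local Open Scope ring_scope.
Local Open Scope fset_scope.

Definition CC : Type := complex Rdefinitions.R.
Definition CC_zero : CC := 0.

Section PolyInfVars.
(* Droot : finite set of nonzero roots of the simple Lie algebra (Δ̊ \ {0});
   pos   : the positive roots Δ̊_+ among them;
   Isimp : the index set I̊ of the simple roots.
   The index set 𝓘 of a Cartan–Weyl basis is Droot + Isimp. *)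
Variables (Droot Isimp : finType) (pos : pred Droot).

Definition calI := (Droot + Isimp)%type.

(* membership in the set  A = {(α,0) : α ∈ Δ̊_+} ∪ (𝓘 × Z_{≥1}) *)
Definition inA (v : calI * nat) : bool :=
  if v.2 == 0%N then (if v.1 is inl r then pos r else false) else true.

Definition Var := {v : calI * nat | inA v}.
Definition level (x : Var) : nat := (val x).2.

Definition monomial := {fsfun Var -> nat for fun _ => 0%N}.

(* O(n_+) = C[X^{a,n}] : finitely supported coefficient functions on monomials *)
Definition Opoly := {fsfun monomial -> CC for fun _ => CC_zero}.

(* weight of a monomial; its degree in the Z-grading is  - weight *)
Definition weight (m : monomial) : nat :=
  (\sum_(x <- finsupp m) m x * level x)%N.

Definition in_degrees (P : Opoly) (lo hi : int) : bool :=
  [forall m : finsupp P, (lo <= - (weight (val m))%:Z <= hi)].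

(* P ∈ O(n_+)_{<k} ⊗ (C ⊕ ⊕_{(b,m)∈A, m≥k} C X^{b,m}) : in each monomial of P,
   the variables of level ≥ k occur with total multiplicity at most 1. *)
Definition in_tensor (k : int) (P : Opoly) : bool :=
  [forall m : finsupp P,
     \sum_(x <- finsupp (val m) | (k <= (level x)%:Z)%R) (val m) x <= 1]%N.

End PolyInfVars.

(** A monomial in which the variables of level at least [k] occur with total
    multiplicity at least two has weight at least [2k].  Bounded grade caps the
    weight of every monomial of [P^{a,n}] by [n + M], which is below [2(n - K)]
    once [n > 2|K| + M]. *)
From HB Require Import structures.
From mathcomp Require Import all_boot all_order all_algebra finmap.
From mathcomp Require Import zify.
Set Implicit Arguments. Unset Strict Implicit. Unset Printing Implicit Defensive.
Import Order.TTheory GRing.Theory Num.Theory.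
Local Open Scope ring_scope.

Section MonomialWeight.
Variables (Droot Isimp : finType) (pos : pred Droot).

Lemma high_level_mass_mul_le_weight (m : @monomial Droot Isimp pos) (k : nat) :
  ((\sum_(x <- finsupp m | (k <= level x)%N) m x) * k <= weight m)%N.
Proof.
rewrite /weight big_distrl /= [X in (_ <= X)%N](bigID (fun x => k <= level x)%N).
apply: leq_trans (leq_addr _ _); apply: leq_sum => x k_le_level.
by rewrite leq_mul2l k_le_level orbT.
Qed.

Lemma in_degrees_weight_le (P : @Opoly Droot Isimp pos) (n M : nat) :
  in_degrees P (- n%:Z - M%:Z) (- n%:Z + M%:Z) ->
  forall m : finsupp P, (weight (val m) <= n + M)%N.
Proof.
move=> /forallP degP m; have /andP[lo_le _] := degP m.
by rewrite -lez_nat PoszD -lerN2 opprD.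
Qed.

Lemma in_tensor_of_weight_lt (k : nat) (P : @Opoly Droot Isimp pos) :
  (forall m : finsupp P, (weight (val m) < k.*2)%N) -> in_tensor k%:Z P.
Proof.
move=> weight_lt; apply/forallP => m.
rewrite (eq_bigl (fun x => k <= level x)%N) => [|x]; last by rewrite lez_nat.
rewrite leqNgt; apply/negP => two_le_mass.
have := leq_trans (leq_mul two_le_mass (leqnn k))
  (high_level_mass_mul_le_weight (val m) k).
by rewrite mul2n leqNgt weight_lt.
Qed.

End MonomialWeight.

Theorem lemma2p9 (Droot Isimp : finType) (pos : pred Droot)
    (P : calI Droot Isimp -> nat -> @Opoly Droot Isimp pos) :
  (* bounded grade: P^{a,n} ∈ ⊕_{k=-M}^{M} O(n_+)_{[-n+k]} for all (a,n) ∈ A *)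
  (exists M : nat, forall (a : calI Droot Isimp) (n : nat), @inA Droot Isimp pos (a, n) ->
       in_degrees (P a n) (- n%:Z - M%:Z) (- n%:Z + M%:Z)) ->
  forall K : int, exists N : nat, forall (a : calI Droot Isimp) (n : nat),
    (N <= n)%N -> @inA Droot Isimp pos (a, n) -> in_tensor (n%:Z - K) (P a n).
Proof.
move=> [M boundedP] K; exists (`|K| * 2 + M).+1%N => a n n_large inA_an.
have [k def_k] : exists k : nat, n%:Z - K = k%:Z.
  by exists `|n%:Z - K|%N; rewrite gez0_abs //; lia.
have bound_lt : (n + M < k.*2)%N by rewrite -mul2n; lia.
rewrite def_k; apply: in_tensor_of_weight_lt => m.
exact: leq_ltn_trans (in_degrees_weight_le (boundedP a n inA_an) m) bound_lt.
Qed.
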